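(* Let $\varsigma$ and $\omega$ be regular axially symmetric functions on the unit sphere $S^2$ (functions of $\theta\in[0,\pi]$) such that $$\mathcal M=\int_0^\pi\left(|\partial_\theta\varsigma|^2+4\varsigma+\frac{|\partial_\theta\omega|^2}{\eta^2}\right)\sin\theta\,d\theta,\qquad \eta=e^{\varsigma}\sin^2\theta,$$ is finite, and assume $\partial_\theta\omega=0$ at $\theta=0$ and $\theta=\pi$. Then $$\mathcal M\ge 8\big(\ln(2|J|)+1\big),\qquad\text{where } J=\tfrac18\big(\omega(\pi)-\omega(0)\big).$$ *)

From Stdlib Require Import Reals.
From Coquelicot Require Import Coquelicot.
Open Scope R_scope.

Definition eta (sigma : R -> R) (th : R) : R := exp (sigma th) * (sin th) ^ 2.

Definition M_integrand (sigma omega : R -> R) (th : R) : R :=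
  ((Derive sigma th) ^ 2 + 4 * sigma th
   + (Derive omega th) ^ 2 / (eta sigma th) ^ 2) * sin th.

(* "M is finite and equals m": the improper Riemann integral over (0, pi)
   of the integrand converges to m. *)
Definition M_value (sigma omega : R -> R) (m : R) : Prop :=
  is_RInt_gen (M_integrand sigma omega) (at_right 0) (at_left PI) m.

Definition regular_on_0pi (f : R -> R) : Prop :=
  forall th, 0 <= th <= PI -> ex_derive f th /\ continuous (Derive f) th.

Definition ang_mom (omega : R -> R) : R := (omega PI - omega 0) / 8.

From Stdlib Require Import Reals Lra Psatz.
From Coquelicot Require Import Coquelicot.
Open Scope R_scope.

(* For all real a, b the integrand of M dominates the derivative of the calibration
     2 ln ((ω - a)² + η²) - 2 ln ((ω - b)² + η²)
       + 4 ln ((1 + cos θ) / (1 - cos θ)) - 4 cos θ (1 + ς).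
   After completing the square in ∂ς this is AM-GM combined with the fact that, along a
   curve (ω, η) in the upper half-plane, the derivatives of ln |(ω, η) - (a, 0)| and
   ln |(ω, η) - (b, 0)| differ by at most the hyperbolic speed |(ω', η')| / η.  Integrating
   over [α, β] with a = ω(α), b = ω(β) and dropping η² in the two mixed logarithms bounds
   the mass on [α, β] below by 4 ln (ω(β) - ω(α))² plus terms at α and β; as α → 0 and
   β → π these tend to 8 (ln (2|J|) + 1). *)

(* (W, y) and (V, y) are a point of the upper half-plane seen from two points of the real axis,
   (x', y') its velocity. *)
Lemma sqr_log_dist_deriv_diff_le (W V y x' y' : R) : 0 < y ->
  ((W * x' + y * y') / (W ^ 2 + y ^ 2) - (V * x' + y * y') / (V ^ 2 + y ^ 2)) ^ 2
  <= (x' ^ 2 + y' ^ 2) / y ^ 2.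
Proof.
intros Hy.
set (A := W ^ 2 + y ^ 2); set (B := V ^ 2 + y ^ 2).
assert (HA : 0 < A) by (unfold A; nra).
assert (HB : 0 < B) by (unfold B; nra).
set (u1 := W * B - V * A); set (u2 := y * (B - A)).
set (N := u1 * x' + u2 * y').
assert (Hdiff : (W * x' + y * y') / A - (V * x' + y * y') / B = N / (A * B))
  by (unfold N, u1, u2; field; lra).
(* Cauchy-Schwarz, with |(u1, u2)|² = (W - V)² A B <= (A B)² / y². *)
assert (Hcs : N ^ 2 <= (u1 ^ 2 + u2 ^ 2) * (x' ^ 2 + y' ^ 2))
  by (unfold N; pose proof (pow2_ge_0 (u1 * y' - u2 * x')); nra).
assert (Hu : (u1 ^ 2 + u2 ^ 2) * y ^ 2 <= (A * B) ^ 2).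
{ replace (u1 ^ 2 + u2 ^ 2) with ((W - V) ^ 2 * (A * B)) by (unfold u1, u2, A, B; ring).
  assert (Hk : (W - V) ^ 2 * y ^ 2 <= A * B)
    by (unfold A, B; pose proof (pow2_ge_0 (W * V + y ^ 2)); nra).
  assert (HAB : 0 < A * B) by nra.
  replace ((A * B) ^ 2) with ((A * B) * (A * B)) by ring.
  replace ((W - V) ^ 2 * (A * B) * y ^ 2) with (((W - V) ^ 2 * y ^ 2) * (A * B)) by ring.
  apply Rmult_le_compat_r; lra. }
rewrite Hdiff.
assert (HAB : 0 < A * B) by nra.
replace ((N / (A * B)) ^ 2) with (N ^ 2 / (A * B) ^ 2) by (field; lra).
apply (Rmult_le_reg_r ((A * B) ^ 2 * y ^ 2)); [apply Rmult_lt_0_compat; apply pow_lt; lra|].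
replace (N ^ 2 / (A * B) ^ 2 * ((A * B) ^ 2 * y ^ 2)) with (N ^ 2 * y ^ 2) by (field; lra).
replace ((x' ^ 2 + y' ^ 2) / y ^ 2 * ((A * B) ^ 2 * y ^ 2)) with ((x' ^ 2 + y' ^ 2) * (A * B) ^ 2)
  by (field; lra).
assert (0 <= x' ^ 2 + y' ^ 2) by nra.
nra.
Qed.

Lemma calibration_inequality (s c y S' w W V : R) :
  0 < s -> s ^ 2 + c ^ 2 = 1 -> 0 < y ->
  4 * ((W * w + y * (y * (S' + 2 * c / s))) / (W ^ 2 + y ^ 2)
       - (V * w + y * (y * (S' + 2 * c / s))) / (V ^ 2 + y ^ 2))
  - 8 / s + 4 * s - 4 * c * S' <= (S' ^ 2 + w ^ 2 / y ^ 2) * s.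
Proof.
(* With y' the derivative of η, the gap is s |(w, y')|² / y² - 4 t + 4 / s, which is at least
   s t² - 4 t + 4 / s = (s t - 2)² / s. *)
intros Hs Hsc Hy.
set (y' := y * (S' + 2 * c / s)).
set (t := (W * w + y * y') / (W ^ 2 + y ^ 2) - (V * w + y * y') / (V ^ 2 + y ^ 2)).
assert (Ht : t ^ 2 <= (w ^ 2 + y' ^ 2) / y ^ 2) by (apply sqr_log_dist_deriv_diff_le; exact Hy).
assert (Hgap : (S' ^ 2 + w ^ 2 / y ^ 2) * s - (4 * t - 8 / s + 4 * s - 4 * c * S')
               = s * ((w ^ 2 + y' ^ 2) / y ^ 2) - 4 * t + 4 / s + 4 * (1 - (s ^ 2 + c ^ 2)) / s)
  by (unfold y'; field; lra).
rewrite Hsc, Rminus_diag, Rmult_0_r, Rdiv_0_l, Rplus_0_r in Hgap.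
assert (Hsq : s * t ^ 2 - 4 * t + 4 / s = (s * t - 2) ^ 2 / s) by (field; lra).
assert (0 <= (s * t - 2) ^ 2 / s) by (apply Rdiv_le_0_compat; [apply pow2_ge_0 | exact Hs]).
assert (s * t ^ 2 <= s * ((w ^ 2 + y' ^ 2) / y ^ 2)) by (apply Rmult_le_compat_l; lra).
lra.
Qed.

Lemma sin_cos_pos th : 0 < th < PI -> 0 < sin th /\ 0 < 1 + cos th /\ 0 < 1 - cos th.
Proof.
intros Hth; assert (Hs : 0 < sin th) by (apply sin_gt_0; lra).
pose proof (sin2_cos2 th) as Hsc; unfold Rsqr in Hsc; repeat split; nra.
Qed.

Lemma eta_pos sigma th : 0 < th < PI -> 0 < eta sigma th.
Proof.
intros Hth; destruct (sin_cos_pos th Hth) as [Hs _].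
apply Rmult_lt_0_compat; [apply exp_pos | apply pow_lt; exact Hs].
Qed.

Lemma sin_div_1pcos_add_sin_div_1mcos th : 0 < th < PI ->
  sin th / (1 + cos th) + sin th / (1 - cos th) = 2 / sin th.
Proof.
intros Hth; destruct (sin_cos_pos th Hth) as [Hs [Hc1 Hc2]].
assert (Hsc : (1 + cos th) * (1 - cos th) = sin th ^ 2)
  by (pose proof (sin2_cos2 th); unfold Rsqr in *; lra).
replace (sin th / (1 + cos th) + sin th / (1 - cos th))
  with (2 * sin th / ((1 + cos th) * (1 - cos th))) by (field; lra).
rewrite Hsc; field; lra.
Qed.

(* Coquelicot's continuous_plus, continuous_mult, ... are stated with the ring operations of an
   abstract normed module and do not unify with Rplus, Rmult, ... under apply. *)
Lemma continuous_Rplus (f g : R -> R) x :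
  continuous f x -> continuous g x -> continuous (fun y => f y + g y) x.
Proof. exact (continuous_plus f g x). Qed.

Lemma continuous_Rminus (f g : R -> R) x :
  continuous f x -> continuous g x -> continuous (fun y => f y - g y) x.
Proof. exact (continuous_minus f g x). Qed.

Lemma continuous_Rmult (f g : R -> R) x :
  continuous f x -> continuous g x -> continuous (fun y => f y * g y) x.
Proof. exact (continuous_mult f g x). Qed.

Lemma continuous_Rpow (f : R -> R) n x :
  continuous f x -> continuous (fun y => f y ^ n) x.
Proof.
intros Hf; apply (continuous_comp f (fun u => u ^ n)); [exact Hf|].
apply (ex_derive_continuous (V := R_NormedModule)); auto_derive; trivial.
Qed.

Lemma continuous_ln_comp (f : R -> R) x :
  continuous f x -> 0 < f x -> continuous (fun y => ln (f y)) x.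
Proof. intros Hf Hpos; exact (continuous_comp f ln x Hf (continuous_ln _ Hpos)). Qed.

Lemma is_RInt_ge_increment (f F dF : R -> R) (l u a b v : R) :
  l < a -> a <= b -> b < u ->
  (forall x, l < x < u -> continuous f x) ->
  (forall x, l < x < u -> is_derive F x (dF x)) ->
  (forall x, l < x < u -> dF x <= f x) ->
  is_RInt f a b v -> F b - F a <= v.
Proof.
intros Hla Hab Hbu Hf HF HdF Hv.
set (K := fun x => RInt f a x - F x).
assert (HK : forall x, l < x < u -> is_derive K x (f x - dF x)).
{ intros x Hx.
  enough (HI : is_derive (fun y => RInt f a y) x (f x))
    by exact (is_derive_minus _ _ x _ _ HI (HF x Hx)).
  apply (is_derive_RInt f _ a); [| exact (Hf x Hx)].
  assert (Hr : 0 < Rmin (x - l) (u - x)) by (apply Rmin_glb_lt; lra).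
  exists (mkposreal _ Hr); intros y Hy.
  change (Rabs (y - x) < Rmin (x - l) (u - x)) in Hy.
  pose proof (Rmin_l (x - l) (u - x)); pose proof (Rmin_r (x - l) (u - x)).
  apply Rabs_lt_between' in Hy.
  apply (RInt_correct (V := R_CompleteNormedModule)),
        (ex_RInt_continuous (V := R_CompleteNormedModule)).
  intros z Hz; apply Hf.
  assert (l < Rmin a y) by (apply Rmin_glb_lt; lra).
  assert (Rmax a y < u) by (apply Rmax_lub_lt; lra).
  lra. }
destruct (MVT_gen K a b (fun x => f x - dF x)) as [c [Hc Heq]].
- intros x Hx; rewrite Rmin_left, Rmax_right in Hx by lra; apply HK; lra.
- intros x Hx; rewrite Rmin_left, Rmax_right in Hx by lra.
  apply continuity_pt_filterlim, (ex_derive_continuous (V := R_NormedModule)).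
  eexists; apply HK; lra.
- rewrite Rmin_left, Rmax_right in Hc by lra.
  unfold K in Heq; rewrite RInt_point, (is_RInt_unique _ _ _ _ Hv) in Heq.
  change (zero : R) with 0 in Heq.
  assert (dF c <= f c) by (apply HdF; lra).
  assert (0 <= (f c - dF c) * (b - a)) by (apply Rmult_le_pos; lra).
  lra.
Qed.

Lemma locally_neq_0 (l : R) : l <> 0 -> locally l (fun u => u <> 0).
Proof.
intros Hl; assert (Habs : 0 < Rabs l) by (apply Rabs_pos_lt; exact Hl).
exists (mkposreal _ Habs); intros u Hu Hu0.
change (Rabs (u - l) < Rabs l) in Hu.
rewrite Hu0, Rminus_0_l, Rabs_Ropp in Hu; lra.
Qed.

Lemma filterlim_Rplus {T} {F : (T -> Prop) -> Prop} {FF : Filter F} (f g : T -> R) (x y : R) :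
  filterlim f F (locally x) -> filterlim g F (locally y) ->
  filterlim (fun p => f p + g p) F (locally (x + y)).
Proof. intros Hf Hg; exact (filterlim_comp_2 f g plus Hf Hg (filterlim_plus x y)). Qed.

Lemma filterlim_fst_continuous {T} {G : (T -> Prop) -> Prop} {FG : Filter G}
  (D : R -> Prop) (f : R -> R) (x : R) :
  continuous f x ->
  filterlim (fun p => f (fst p)) (filter_prod (within D (locally x)) G) (locally (f x)).
Proof.
intros Hf; eapply filterlim_comp; [apply filterlim_fst|].
eapply filterlim_filter_le_1; [apply filter_le_within | exact Hf].
Qed.

Lemma filterlim_snd_continuous {T} {F : (T -> Prop) -> Prop} {FF : Filter F}
  (D : R -> Prop) (f : R -> R) (x : R) :
  continuous f x ->
  filterlim (fun p => f (snd p)) (filter_prod F (within D (locally x))) (locally (f x)).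
Proof.
intros Hf; eapply filterlim_comp; [apply filterlim_snd|].
eapply filterlim_filter_le_1; [apply filter_le_within | exact Hf].
Qed.

Lemma is_RInt_gen_ge_lim {Fa Fb : (R -> Prop) -> Prop}
  {FFa : ProperFilter Fa} {FFb : ProperFilter Fb}
  (f : R -> R) (B : R * R -> R) (b l : R) :
  filter_prod Fa Fb (fun p => forall v, is_RInt f (fst p) (snd p) v -> B p <= v) ->
  filterlim B (filter_prod Fa Fb) (locally b) ->
  is_RInt_gen f Fa Fb l -> b <= l.
Proof.
intros HB HBlim Hl.
set (If := fun p : R * R => RInt f (fst p) (snd p)).
assert (HIf : forall P, locally l P ->
          filter_prod Fa Fb (fun p => is_RInt f (fst p) (snd p) (If p) /\ P (If p))).
{ intros P HP; generalize (Hl P HP); unfold filtermapi; apply filter_imp; intros p [v [Hv Pv]].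
  unfold If; rewrite (is_RInt_unique _ _ _ _ Hv); exact (conj Hv Pv). }
assert (HIlim : filterlim If (filter_prod Fa Fb) (locally l)).
{ intros P HP; generalize (HIf P HP); unfold filtermap; apply filter_imp.
  intros p [_ Pp]; exact Pp. }
assert (Hle : filter_prod Fa Fb (fun p => B p <= If p)).
{ generalize (filter_and _ _ HB (HIf _ (filter_true (F := locally l)))); apply filter_imp.
  intros p [HBp [Hp _]]; exact (HBp _ Hp). }
assert (PF : ProperFilter' (filter_prod Fa Fb))
  by (apply Proper_StrongProper, filter_prod_proper; assumption).
exact (filterlim_le _ _ (Finite b) (Finite l) Hle HBlim HIlim).
Qed.

Lemma eventually_in_0PI :
  filter_prod (at_right 0) (at_left PI) (fun p => 0 < fst p <= snd p /\ snd p < PI).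
Proof.
pose proof PI_RGT_0 as HPI; assert (Hhalf : 0 < PI / 2) by lra.
apply (Filter_prod _ _ _ (fun x => 0 < x < PI / 2) (fun y => PI / 2 < y < PI)).
- exists (mkposreal _ Hhalf); intros y Hy Hy0.
  change (Rabs (y - 0) < PI / 2) in Hy; apply Rabs_lt_between' in Hy; simpl in *; lra.
- exists (mkposreal _ Hhalf); intros y Hy Hy0.
  change (Rabs (y - PI) < PI / 2) in Hy; apply Rabs_lt_between' in Hy; simpl in *; lra.
- intros x y Hx Hy; simpl; lra.
Qed.

Section Calibration.

Variables sigma omega : R -> R.

Definition calibration (a b th : R) : R :=
  2 * ln ((omega th - a) ^ 2 + eta sigma th ^ 2) - 2 * ln ((omega th - b) ^ 2 + eta sigma th ^ 2)
  + 4 * ln (1 + cos th) - 4 * ln (1 - cos th) - 4 * cos th * (1 + sigma th).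

Definition calibration_deriv (a b th : R) : R :=
  let y := eta sigma th in
  let y' := y * (Derive sigma th + 2 * cos th / sin th) in
  let w := Derive omega th in
  4 * (((omega th - a) * w + y * y') / ((omega th - a) ^ 2 + y ^ 2)
       - ((omega th - b) * w + y * y') / ((omega th - b) ^ 2 + y ^ 2))
  - 8 / sin th + 4 * sin th * (1 + sigma th) - 4 * cos th * Derive sigma th.

Lemma is_derive_calibration a b th : 0 < th < PI ->
  ex_derive sigma th -> ex_derive omega th ->
  is_derive (calibration a b) th (calibration_deriv a b th).
Proof.
intros Hth Hs Ho; destruct (sin_cos_pos th Hth) as [Hsin [Hc1 Hc2]].
pose proof (eta_pos sigma th Hth) as Heta; unfold eta in Heta.
unfold calibration, calibration_deriv, eta; auto_derive.
- simpl in Heta; repeat split; auto;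
    (rewrite !Rmult_1_r in *; apply Rplus_le_lt_0_compat;
     [apply Rle_0_sqr | apply Rmult_lt_0_compat; exact Heta]).
- change (Derive (fun x => sigma x) th) with (Derive sigma th).
  change (Derive (fun x => omega x) th) with (Derive omega th).
  replace (8 / sin th) with (4 * (sin th / (1 + cos th) + sin th / (1 - cos th)))
    by (rewrite sin_div_1pcos_add_sin_div_1mcos by exact Hth; field; lra).
  assert (Hq : forall u, 0 < u ^ 2 + (exp (sigma th) * sin th ^ 2) ^ 2)
    by (intro u; pose proof (pow2_ge_0 u); pose proof (pow_lt _ 2 Heta); lra).
  field; repeat split; try apply Rgt_not_eq, Hq; lra.
Qed.

Lemma calibration_deriv_le_M_integrand a b th : 0 < th < PI ->
  calibration_deriv a b th <= M_integrand sigma omega th.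
Proof.
intros Hth; destruct (sin_cos_pos th Hth) as [Hsin _].
assert (Hsc : sin th ^ 2 + cos th ^ 2 = 1)
  by (pose proof (sin2_cos2 th); unfold Rsqr in *; lra).
pose proof (calibration_inequality (sin th) (cos th) (eta sigma th) (Derive sigma th)
  (Derive omega th) (omega th - a) (omega th - b) Hsin Hsc (eta_pos sigma th Hth)).
unfold calibration_deriv, M_integrand; cbv zeta; lra.
Qed.

Definition end_term (e th : R) : R :=
  - 4 * sigma th - 8 * ln (1 + e * cos th) + 4 * e * cos th * (1 + sigma th).

Definition mass_lower_bound (al be : R) : R :=
  4 * ln ((omega be - omega al) ^ 2) + end_term (-1) be + end_term 1 al.

Lemma continuous_end_term e th :
  continuous sigma th -> 0 < 1 + e * cos th -> continuous (end_term e) th.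
Proof.
intros Hsigma Hpos; unfold end_term.
apply continuous_Rplus; [apply continuous_Rminus|].
- apply continuous_Rmult; [apply continuous_const | exact Hsigma].
- apply continuous_Rmult; [apply continuous_const|].
  apply continuous_ln_comp; [| exact Hpos].
  apply continuous_Rplus; [apply continuous_const|].
  apply continuous_Rmult; [apply continuous_const | apply continuous_cos].
- apply continuous_Rmult; [| apply continuous_Rplus; [apply continuous_const | exact Hsigma]].
  apply continuous_Rmult; [apply continuous_const | apply continuous_cos].
Qed.

Lemma ln_eta_sqr th : 0 < th < PI ->
  ln (eta sigma th ^ 2) = 2 * sigma th + 2 * ln (1 - cos th) + 2 * ln (1 + cos th).
Proof.
intros Hth; destruct (sin_cos_pos th Hth) as [_ [Hc1 Hc2]].
assert (Hsc : sin th ^ 2 = (1 - cos th) * (1 + cos th))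
  by (pose proof (sin2_cos2 th); unfold Rsqr in *; lra).
pose proof (exp_pos (sigma th)).
unfold eta; rewrite Hsc, ln_pow, !ln_mult, ln_exp by (repeat apply Rmult_lt_0_compat; lra).
simpl; ring.
Qed.

Lemma calibration_increment_ge al be : 0 < al < PI -> 0 < be < PI -> omega be <> omega al ->
  mass_lower_bound al be
  <= calibration (omega al) (omega be) be - calibration (omega al) (omega be) al.
Proof.
intros Hal Hbe Hne.
assert (HD : 0 < (omega be - omega al) ^ 2)
  by (rewrite <- Rsqr_pow2; apply Rsqr_pos_lt, Rminus_eq_contra, Hne).
assert (Hle : forall th, ln ((omega be - omega al) ^ 2)
                         <= ln ((omega be - omega al) ^ 2 + eta sigma th ^ 2))
  by (intro th; apply ln_le; [exact HD | pose proof (pow2_ge_0 (eta sigma th)); lra]).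
unfold mass_lower_bound, end_term, calibration.
rewrite !Rminus_diag, pow_i, !Rplus_0_l, ln_eta_sqr, ln_eta_sqr by (auto; lia).
replace ((omega al - omega be) ^ 2) with ((omega be - omega al) ^ 2) by ring.
replace (1 + -1 * cos be) with (1 - cos be) by ring.
replace (1 + 1 * cos al) with (1 + cos al) by ring.
pose proof (Hle al); pose proof (Hle be); lra.
Qed.

Hypothesis sigma_reg : regular_on_0pi sigma.
Hypothesis omega_reg : regular_on_0pi omega.

Lemma continuous_M_integrand th : 0 < th < PI -> continuous (M_integrand sigma omega) th.
Proof.
intros Hth.
destruct (sigma_reg th ltac:(lra)) as [Ds Cs]; destruct (omega_reg th ltac:(lra)) as [_ Co].
pose proof (ex_derive_continuous (V := R_NormedModule) _ _ Ds) as Csigma.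
unfold M_integrand, eta.
apply continuous_Rmult; [| apply continuous_sin].
repeat apply continuous_Rplus.
- apply continuous_Rpow, Cs.
- apply continuous_Rmult; [apply continuous_const | exact Csigma].
- apply continuous_Rmult; [apply continuous_Rpow, Co|].
  apply continuous_Rinv_comp.
  + apply continuous_Rpow, continuous_Rmult;
      [apply continuous_exp_comp, Csigma | apply continuous_Rpow, continuous_sin].
  + apply pow_nonzero, Rgt_not_eq, (eta_pos sigma th Hth).
Qed.

Lemma RInt_M_integrand_ge_calibration_increment a b al be v : 0 < al <= be -> be < PI ->
  is_RInt (M_integrand sigma omega) al be v -> calibration a b be - calibration a b al <= v.
Proof.
intros Hab Hbe; apply (is_RInt_ge_increment _ _ (calibration_deriv a b) 0 PI); try lra.
- exact continuous_M_integrand.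
- intros x Hx; apply is_derive_calibration; [exact Hx | apply sigma_reg | apply omega_reg]; lra.
- exact (calibration_deriv_le_M_integrand a b).
Qed.

Lemma RInt_M_integrand_ge_mass_lower_bound al be v : 0 < al <= be -> be < PI ->
  omega be <> omega al -> is_RInt (M_integrand sigma omega) al be v ->
  mass_lower_bound al be <= v.
Proof.
intros Hal Hbe Hne Hv.
apply (Rle_trans _ _ _ (calibration_increment_ge al be ltac:(lra) ltac:(lra) Hne)).
exact (RInt_M_integrand_ge_calibration_increment _ _ _ _ _ Hal Hbe Hv).
Qed.

Local Notation FF := (filter_prod (at_right 0) (at_left PI)).

Lemma filterlim_omega_increment :
  filterlim (fun p => omega (snd p) - omega (fst p)) FF (locally (omega PI - omega 0)).
Proof.
pose proof PI_RGT_0.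
destruct (omega_reg 0 ltac:(lra)) as [D0 _]; destruct (omega_reg PI ltac:(lra)) as [DPI _].
exact (filterlim_Rplus _ _ _ _
  (filterlim_snd_continuous _ omega PI (ex_derive_continuous (V := R_NormedModule) _ _ DPI))
  (filterlim_fst_continuous _ (fun x => - omega x) 0
     (continuous_opp _ _ (ex_derive_continuous (V := R_NormedModule) _ _ D0)))).
Qed.

Lemma eventually_mass_lower_bound_le : omega PI <> omega 0 ->
  FF (fun p => forall v, is_RInt (M_integrand sigma omega) (fst p) (snd p) v ->
               mass_lower_bound (fst p) (snd p) <= v).
Proof.
intros Hne.
assert (Hinc : FF (fun p => omega (snd p) - omega (fst p) <> 0))
  by exact (filterlim_omega_increment _ (locally_neq_0 _ (Rminus_eq_contra _ _ Hne))).
generalize (filter_and _ _ eventually_in_0PI Hinc); apply filter_imp.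
intros [al be] [[Hal Hbe] Hinc_p] v; simpl in *.
apply RInt_M_integrand_ge_mass_lower_bound; lra.
Qed.

Lemma filterlim_mass_lower_bound : omega PI <> omega 0 ->
  filterlim (fun p => mass_lower_bound (fst p) (snd p)) FF
    (locally (4 * ln ((omega PI - omega 0) ^ 2) + end_term (-1) PI + end_term 1 0)).
Proof.
intros Hne; pose proof PI_RGT_0.
destruct (sigma_reg 0 ltac:(lra)) as [D0 _]; destruct (sigma_reg PI ltac:(lra)) as [DPI _].
pose proof (ex_derive_continuous (V := R_NormedModule) _ _ D0) as C0.
pose proof (ex_derive_continuous (V := R_NormedModule) _ _ DPI) as CPI.
apply filterlim_Rplus; [apply filterlim_Rplus|].
- apply (filterlim_comp _ _ _ _ (fun u => 4 * ln (u ^ 2)) _ _ _ filterlim_omega_increment).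
  change (continuous (fun u => 4 * ln (u ^ 2)) (omega PI - omega 0)).
  apply continuous_Rmult; [apply continuous_const|].
  apply continuous_ln_comp; [apply continuous_Rpow, continuous_id|].
  rewrite <- Rsqr_pow2; apply Rsqr_pos_lt, Rminus_eq_contra, Hne.
- apply filterlim_snd_continuous, continuous_end_term; [exact CPI | rewrite cos_PI; lra].
- apply filterlim_fst_continuous, continuous_end_term; [exact C0 | rewrite cos_0; lra].
Qed.

Lemma mass_lower_bound_limit_value : omega PI <> omega 0 ->
  4 * ln ((omega PI - omega 0) ^ 2) + end_term (-1) PI + end_term 1 0
  = 8 * (ln (2 * Rabs (ang_mom omega)) + 1).
Proof.
intros Hne; unfold ang_mom, end_term; rewrite cos_PI, cos_0.
set (D := omega PI - omega 0).
assert (HD : 0 < Rabs D) by (apply Rabs_pos_lt, Rminus_eq_contra, Hne).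
replace (D ^ 2) with (Rabs D ^ 2) by apply pow2_abs.
replace (2 * Rabs (D / 8)) with (Rabs D / (2 * 2))
  by (rewrite Rabs_div, (Rabs_right 8) by lra; field).
replace (1 + -1 * -1) with 2 by ring; replace (1 + 1 * 1) with 2 by ring.
rewrite ln_pow, ln_div, ln_mult by lra; simpl; ring.
Qed.

End Calibration.

Theorem lemma3 (sigma omega : R -> R) (M : R) :
  regular_on_0pi sigma -> regular_on_0pi omega ->
  M_value sigma omega M ->
  Derive omega 0 = 0 -> Derive omega PI = 0 ->
  ang_mom omega <> 0 ->
  M >= 8 * (ln (2 * Rabs (ang_mom omega)) + 1).
Proof.
intros Hsigma Homega HM _ _ HJ.
assert (Hne : omega PI <> omega 0)
  by (intros He; apply HJ; unfold ang_mom; rewrite He; field).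
rewrite <- (mass_lower_bound_limit_value sigma omega Hne); apply Rle_ge.
exact (is_RInt_gen_ge_lim _ _ _ _
  (eventually_mass_lower_bound_le sigma omega Hsigma Homega Hne)
  (filterlim_mass_lower_bound sigma omega Hsigma Homega Hne) HM).
Qed.
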